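(* Let $q$ be a prime power, $n\ge1$, and let $C=\langle B_r\rangle\oplus\langle B_t\rangle\subseteq\mathbb{F}_q^n$, where $B_r$ ($r\times n$) and $B_t$ ($t\times n$, $t\ge2$) are matrices over $\mathbb{F}_q$ with linearly independent rows, such that $\langle B_r\rangle$ and $\langle B_t\rangle$ are Euclidean orthogonal (i.e. $B_rB_t^T=0$). Suppose $B_t=\begin{pmatrix}B_{t_\ell}\\ B_{t_Q}\end{pmatrix}$ where $B_{t_\ell}$ has $t_\ell$ rows, $\langle B_{t_Q}\rangle\subseteq\langle B_t\rangle^{\perp_e}$, and $Z:=B_{t_\ell}B_{t_\ell}^T$ is a block diagonal matrix whose diagonal blocks are of the form $\begin{pmatrix}0&1\\1&0\end{pmatrix}$ or $(z_i)$ with $z_i\neq0$, and, only in characteristic $2$, possibly one block $\begin{pmatrix}0&1\\1&1\end{pmatrix}$. Let $A=\begin{pmatrix}A_0Z^{-1}&0\\0&A_1\end{pmatrix}$ where $A_0$ is $t_\ell\times t_\ell$ and $A_1$ is $(t-t_\ell)\times(t-t_\ell)$ over $\mathbb{F}_q$, and assume $A$ is invertible and has no eigenvalue in $\mathbb{F}_q$. Let $c=\mathrm{rank}(HH^T)=\dim C-\dim(C\cap C^{\perp_e})$ for a generator matrix $H$ of $C$. Then $D_A$ gives rise to an EAQECC with parameters $[[n,\,n-2r-t+c',\,d';\,c']]_q$ (i.e. $c(D_A)=c'$, $k(D_A)=n-2r-t+c'$, $d(D_A)=d'$), where $$c'=(c-t_\ell)+\tfrac12\mathrm{rank}(A_0-A_0^T)=c-\mathrm{rank}(B_tB_t^T)+\tfrac12\mathrm{rank}(A_0-A_0^T)$$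 and $d'\ge\min\left\{\delta_1,\left\lceil\left(1+\frac1q\right)\delta_2\right\rceil\right\}$ with $\delta_1=d_H(C^{\perp_e})$, $\delta_2=d_H(\langle B_r\rangle^{\perp_e})$.
   Context: $\mathbb{F}_q$ is the finite field with $q$ elements. $x\cdot_e y=\sum_i x_iy_i$ on $\mathbb{F}_q^n$; $V^{\perp_e}$ is the Euclidean dual; $\langle B\rangle$ is the row space of a matrix $B$; $d_H(V)$ is the minimum Hamming weight of a nonzero vector of $V$. On $\mathbb{F}_q^{2n}$, $(x|y)\cdot_s(z|w)=x\cdot_e w-z\cdot_e y$ and $D^{\perp_s}$ is the symplectic dual. The symplectic weight of $(x|y)$ is $\#\{j:(x_j,y_j)\neq(0,0)\}$; $d_s(S)$ is the minimum symplectic weight of a nonzero element of $S$. For a linear code $D\subseteq\mathbb{F}_q^{2n}$: $c(D)=\frac12(\dim D-\dim(D\cap D^{\perp_s}))$, $k(D)=n-\dim D+c(D)$, $d(D)=d_s(D^{\perp_s}\setminus(D\cap D^{\perp_s}))$; $D$ gives rise to an EAQECC with parameters $[[n,k(D),d(D);c(D)]]_q$. $D_A\subseteq\mathbb{F}_q^{2n}$ is the code generated by the rows of $\begin{pmatrix}B_t & AB_t\\ B_r & 0\\ 0 & B_r\end{pmatrix}$. *)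

From HB Require Import structures.
From mathcomp Require Import all_boot all_order all_algebra.
Set Implicit Arguments. Unset Strict Implicit. Unset Printing Implicit Defensive.
Import Order.TTheory GRing.Theory Num.Theory.
Local Open Scope ring_scope.

Section Defs.
Variable F : finFieldType.

Definition hwt n (v : 'rV[F]_n) : nat := #|[set j : 'I_n | v 0 j != 0]|.

(* d_H(V): minimum Hamming weight of a nonzero vector in the row space of V;
   convention n+1 when the space is zero. *)
Definition dH m n (V : 'M[F]_(m, n)) : nat :=
  \big[minn/n.+1]_(v : 'rV[F]_n | (v <= V)%MS && (v != 0)) hwt v.

Definition edual m n (B : 'M[F]_(m, n)) : 'M[F]_n := kermx B^T.

Definition sprod n (u v : 'rV[F]_(n + n)) : F :=
  (lsubmx u *m (rsubmx v)^T - lsubmx v *m (rsubmx u)^T) 0 0.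

(* J with (u *m J *m v^T) = sprod u v *)
Definition Jmx n : 'M[F]_(n + n) := block_mx 0 1%:M (- 1%:M) 0.

Definition sdual m n (G : 'M[F]_(m, n + n)) : 'M[F]_(n + n) := kermx (Jmx n *m G^T).

Definition swt n (v : 'rV[F]_(n + n)) : nat :=
  #|[set j : 'I_n | (lsubmx v 0 j != 0) || (rsubmx v 0 j != 0)]|.

Definition cD m n (G : 'M[F]_(m, n + n)) : nat :=
  (\rank G - \rank (G :&: sdual G)%MS)./2.
Definition kD m n (G : 'M[F]_(m, n + n)) : int :=
  (n%:Z - (\rank G)%:Z + (cD G)%:Z)%R.
(* "d(D) >= b": every vector of D^{perp_s} \ (D cap D^{perp_s}) has
   symplectic weight at least b (min over the empty set = +infinity) *)
Definition dD_ge m n (G : 'M[F]_(m, n + n)) (b : int) : Prop :=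
  forall v : 'rV[F]_(n + n), (v <= sdual G)%MS -> ~~ (v <= (G :&: sdual G))%MS ->
    (b <= (swt v)%:Z)%R.

Definition DAmx r t n (Br : 'M[F]_(r, n)) (Bt : 'M[F]_(t, n)) (A : 'M[F]_t)
  : 'M[F]_(t + r + r, n + n) :=
  col_mx (col_mx (row_mx Bt (A *m Bt)) (row_mx Br 0)) (row_mx 0 Br).

Inductive zblock := ZHyp | ZDiag of F | ZSpec .
Definition zb_size b := match b with ZDiag _ => 1%N | _ => 2%N end.
Definition zb_entry b (i j : nat) : F :=
  match b with
  | ZHyp => if i == j then 0 else 1
  | ZDiag z => z
  | ZSpec => if (i == 1%N) && (j == 1%N) then 1 else if i == j then 0 else 1
  end.
Fixpoint zblk_fun (bs : seq zblock) (i j : nat) : F :=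
  match bs with
  | [::] => 0
  | b :: bs' => let s := zb_size b in
      if (i < s)%N && (j < s)%N then zb_entry b i j
      else if (s <= i)%N && (s <= j)%N then zblk_fun bs' (i - s) (j - s) else 0
  end.
Definition is_ZSpec b := if b is ZSpec then true else false.
Definition zb_ok b := if b is ZDiag z then z != 0 else true.

Definition admissible_Z m (Z : 'M[F]_m) : Prop :=
  exists bs : seq zblock,
    [/\ sumn (map zb_size bs) = m,
        forall i j : 'I_m, Z i j = zblk_fun bs i j,
        all zb_ok bs,
        (count is_ZSpec bs <= 1)%N &
        (has is_ZSpec bs -> 2%N \in [pchar F])].

End Defs.

(* D_A is spanned by the independent rows (B_t | A B_t), (B_r | 0), (0 | B_r), so
   dim D_A = t + 2r, and c(D_A) is half the rank of its symplectic Gram matrix.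
   When B_r B_t^T = 0 that Gram matrix is block diagonal, with one block M^T - M for
   M = A B_t B_t^T and two blocks ±B_r B_r^T.  Here B_t B_t^T = diag(Z, 0) with Z
   invertible, so M = diag(A_0, 0), and rank(H H^T) = rank(B_r B_r^T) + t_l.
   A vector (x | y) of the symplectic dual satisfies x, y ⊥ B_r and
   y B_t^T = x B_t^T A^T.  If x B_t^T = 0, then x and y lie in C^⊥.  Otherwise, since
   A has no eigenvalue, the q + 1 vectors x and y - λx are nonzero in <B_r>^⊥, and
   together they cover each coordinate of the symplectic support of (x | y) exactly
   q times. *)

From HB Require Import structures.
From mathcomp Require Import all_boot all_order all_algebra.
From mathcomp Require Import zify.
Set Implicit Arguments. Unset Strict Implicit. Unset Printing Implicit Defensive.
Import Order.TTheory GRing.Theory Num.Theory.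
Local Open Scope ring_scope.

Section BlockDiagonal.
Variable F : finFieldType.
Implicit Types (b : zblock F) (bs : seq (zblock F)).

Fixpoint blkdiag_fun (e : zblock F -> nat -> nat -> F) bs (i j : nat) : F :=
  match bs with
  | [::] => 0
  | b :: bs' => let s := zb_size b in
      if (i < s)%N && (j < s)%N then e b i j
      else if (s <= i)%N && (s <= j)%N then blkdiag_fun e bs' (i - s) (j - s) else 0
  end.

Arguments blkdiag_fun : simpl never.

Lemma blkdiag_fun_cons e b bs i j : blkdiag_fun e (b :: bs) i j =
  let s := zb_size b in
  if (i < s)%N && (j < s)%N then e b i j
  else if (s <= i)%N && (s <= j)%N then blkdiag_fun e bs (i - s) (j - s) else 0.
Proof. by []. Qed.

Lemma zblk_funE bs : zblk_fun bs =2 blkdiag_fun (@zb_entry F) bs.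
Proof. by elim: bs => //= b bs IH i j; rewrite blkdiag_fun_cons IH. Qed.

Section Cons.
Variables (e : zblock F -> nat -> nat -> F) (b : zblock F) (bs : seq (zblock F)).
Local Notation s := (zb_size b).

Lemma blkdiag_fun_cons_headc i k : (k < s)%N ->
  blkdiag_fun e (b :: bs) i k = if (i < s)%N then e b i k else 0.
Proof.
by move=> ks; rewrite blkdiag_fun_cons /= ks andbT; case: ltnP => // _; rewrite (leqNgt s k) ks.
Qed.

Lemma blkdiag_fun_cons_tailc i k :
  blkdiag_fun e (b :: bs) i (s + k) = if (s <= i)%N then blkdiag_fun e bs (i - s) k else 0.
Proof. by rewrite blkdiag_fun_cons /= [(s + k < s)%N]ltnNge leq_addr andbF andbT addKn. Qed.

Lemma blkdiag_fun_cons_headr k j : (k < s)%N ->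
  blkdiag_fun e (b :: bs) k j = if (j < s)%N then e b k j else 0.
Proof.
by move=> ks; rewrite blkdiag_fun_cons /= ks; case: ltnP => // _; rewrite (leqNgt s k) ks.
Qed.

Lemma blkdiag_fun_cons_tailr k j :
  blkdiag_fun e (b :: bs) (s + k) j = if (s <= j)%N then blkdiag_fun e bs k (j - s) else 0.
Proof. by rewrite blkdiag_fun_cons /= [(s + k < s)%N]ltnNge leq_addr /= addKn. Qed.

End Cons.

Lemma blkdiag_mul_id (P : pred (zblock F)) (e e' : zblock F -> nat -> nat -> F) bs i j :
    (forall b, P b -> forall i j, (i < zb_size b)%N -> (j < zb_size b)%N ->
       \sum_(k < zb_size b) e b i k * e' b k j = (i == j)%:R) ->
    all P bs -> (i < sumn (map (@zb_size F) bs))%N -> (j < sumn (map (@zb_size F) bs))%N ->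
  \sum_(k < sumn (map (@zb_size F) bs)) blkdiag_fun e bs i k * blkdiag_fun e' bs k j = (i == j)%:R.
Proof.
move=> blk_id; elim: bs i j => [//|b bs IH] i j.
rewrite map_cons [sumn (_ :: _)]/= => /andP[Pb Pbs] im jm.
rewrite big_split_ord /=.
under eq_bigr => k _ do rewrite blkdiag_fun_cons_headc // blkdiag_fun_cons_headr //.
under [X in _ + X]eq_bigr => k _ do rewrite blkdiag_fun_cons_tailc blkdiag_fun_cons_tailr.
case: (ltnP i (zb_size b)) => iS; case: (ltnP j (zb_size b)) => jS.
- rewrite [X in _ + X]big1 ?addr0 => [|k _]; [exact: blk_id Pb _ _ iS jS | exact: mul0r].
- rewrite !big1 ?addr0 => [|k _|k _]; rewrite ?mulr0 ?mul0r //.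
  by rewrite ltn_eqF // (leq_trans iS jS).
- rewrite !big1 ?addr0 => [|k _|k _]; rewrite ?mulr0 ?mul0r //.
  by rewrite gtn_eqF // (leq_trans jS iS).
- rewrite big1 ?add0r => [|k _]; last exact: mul0r.
  by rewrite -(eqn_sub2rE iS jS) IH // ltn_subLR.
Qed.

Definition zb_inv_entry b (i j : nat) : F :=
  match b with
  | ZHyp => if i == j then 0 else 1
  | ZDiag z => z^-1
  | ZSpec => if (i == 0%N) && (j == 0%N) then -1 else if i == j then 0 else 1
  end.

Lemma zb_mul_inv b : zb_ok b -> forall i j, (i < zb_size b)%N -> (j < zb_size b)%N ->
  \sum_(k < zb_size b) zb_entry b i k * zb_inv_entry b k j = (i == j)%:R.
Proof.
case: b => [|z|] /= b_ok [|[|i]] [|[|j]] //= _ _; rewrite ?big_ord_recr big_ord0 /=.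
all: by rewrite add0r ?mulr0 ?mul0r ?mulr1 ?mul1r ?addr0 ?add0r ?mulfV ?addNr.
Qed.

Lemma admissible_Z_unit m (Z : 'M[F]_m) : admissible_Z Z -> Z \in unitmx.
Proof.
case=> bs [m_E Z_E bs_ok _ _]; subst m.
pose Zi : 'M_(sumn (map (@zb_size F) bs)) := \matrix_(i, j) blkdiag_fun zb_inv_entry bs i j.
suff: Z *m Zi = 1%:M by case/mulmx1_unit.
apply/matrixP => i j.
rewrite !mxE -(blkdiag_mul_id zb_mul_inv bs_ok (ltn_ord i) (ltn_ord j)).
by apply: eq_bigr => k _; rewrite Z_E zblk_funE mxE.
Qed.

End BlockDiagonal.

Section Matrices.
Variable F : fieldType.

Lemma mxrank_col_mxAC m1 m2 m3 n (X1 : 'M[F]_(m1, n)) (X2 : 'M_(m2, n)) (X3 : 'M_(m3, n)) :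
  \rank (col_mx (col_mx X1 X2) X3) = \rank (col_mx (col_mx X1 X3) X2).
Proof.
rewrite -!addsmxE -(adds_eqmx (addsmxE X1 X2) (eqmx_refl X3)).
by rewrite -(adds_eqmx (addsmxE X1 X3) (eqmx_refl X2)) -!addsmxA (addsmxC X2).
Qed.

Lemma row_free_col_mx m1 m2 n (X1 : 'M[F]_(m1, n)) (X2 : 'M_(m2, n)) :
  row_free X1 -> row_free X2 -> mxdirect (X1 + X2) -> row_free (col_mx X1 X2).
Proof.
move=> fr1 fr2; rewrite mxdirectE /= => /eqP rk12.
by rewrite /row_free -addsmxE rk12 (eqP fr1) (eqP fr2).
Qed.

Lemma rank_gram_col_mx m1 m2 n (X1 : 'M[F]_(m1, n)) (X2 : 'M_(m2, n)) :
  X1 *m X2^T = 0 ->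
  \rank (col_mx X1 X2 *m (col_mx X1 X2)^T) = (\rank (X1 *m X1^T) + \rank (X2 *m X2^T))%N.
Proof.
move=> X12; have X21 : X2 *m X1^T = 0 by rewrite -[X2]trmxK -trmx_mul X12 trmx0.
by rewrite tr_col_mx mul_col_row X12 X21 rank_diag_block_mx.
Qed.

Lemma row_free_tr_sub_scalar n (M : 'M[F]_n) a : ~~ eigenvalue M a -> row_free (M - a%:M)^T.
Proof. by rewrite /eigenvalue /eigenspace negbK kermx_eq0 !row_free_unit unitmx_tr. Qed.

End Matrices.

Section Weights.
Variable F : finFieldType.

Lemma card_set_predE n (P : pred 'I_n) : #|[set j | P j]| = (\sum_(j < n) P j)%N.
Proof. by rewrite -sum1_card big_mkcond; apply: eq_bigr => j _; rewrite inE; case: (P j). Qed.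

Lemma hwtE n (u : 'rV[F]_n) : hwt u = (\sum_(j < n) (u 0%R j != 0%R))%N.
Proof. exact: card_set_predE. Qed.

Lemma swtE n (v : 'rV[F]_(n + n)) :
  swt v = (\sum_(j < n) ((lsubmx v 0%R j != 0%R) || (rsubmx v 0%R j != 0%R)))%N.
Proof. exact: card_set_predE. Qed.

Lemma hwt_lsub_le_swt n (v : 'rV[F]_(n + n)) : (hwt (lsubmx v) <= swt v)%N.
Proof. by apply: subset_leq_card; apply/subsetP => j; rewrite !inE => ->. Qed.

Lemma hwt_rsub_le_swt n (v : 'rV[F]_(n + n)) : (hwt (rsubmx v) <= swt v)%N.
Proof. by apply: subset_leq_card; apply/subsetP => j; rewrite !inE orbC => ->. Qed.

Lemma count_line_nonzero (a b : F) :
  ((a != 0%R) + \sum_(l : F) ((b - l * a)%R != 0%R) = #|F| * ((a != 0%R) || (b != 0%R)))%N.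
Proof.
case: (eqVneq a 0) => [-> | a_neq0] /=.
  by under eq_bigr do rewrite mulr0 subr0; rewrite sum_nat_const cardT -cardE.
rewrite (bigD1 (b / a)) //= divfK // subrr eqxx add0n.
rewrite (eq_bigr (fun _ => 1%N)) => [|l l_neq]; last first.
  by rewrite subr_eq0; case: eqP => // b_eq; rewrite b_eq mulfK // eqxx in l_neq.
by rewrite sum1_card cardC1 muln1 add1n prednK //; apply/card_gt0P; exists 0.
Qed.

Lemma sum_hwt_projective_line n (v : 'rV[F]_(n + n)) :
  (hwt (lsubmx v) + \sum_(l : F) hwt (rsubmx v - l *: lsubmx v))%N = (#|F| * swt v)%N.
Proof.
rewrite swtE hwtE (eq_bigr _ (fun l _ => hwtE _)) exchange_big -big_split big_distrr /=.
apply: eq_bigr => j _; rewrite -count_line_nonzero; congr (_ + _)%N.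
by apply: eq_bigr => l _; rewrite !mxE.
Qed.

Lemma dH_le m n (V : 'M[F]_(m, n)) v : (v <= V)%MS -> v != 0 -> (dH V <= hwt v)%N.
Proof. by move=> vV v_neq0; apply: (bigmin_le_cond n.+1 (@hwt F n)); rewrite vV v_neq0. Qed.

End Weights.

Lemma ceil_le_of_mul_le (q d s : nat) : (0 < q)%N -> ((q + 1) * d <= q * s)%N ->
  Num.ceil ((1 + (q%:Q)^-1) * d%:Q) <= s%:Z.
Proof.
move=> q_gt0 le_qd_qs; rewrite ceil_le_int.
have q_pos : 0 < q%:Q by rewrite ltr0n.
rewrite -(ler_pM2l q_pos) mulrA mulrDr mulr1 mulfV ?gt_eqF //.
by rewrite -!pmulrn natr1 -!natrM ler_nat -addn1.
Qed.

Section Symplectic.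
Variable F : finFieldType.

Lemma cD_gram m n (G : 'M[F]_(m, n + n)) : cD G = (\rank (G *m (Jmx F n *m G^T)))./2.
Proof. by rewrite /cD /sdual -(mxrank_mul_ker G (Jmx F n *m G^T)) addnK. Qed.

Lemma mul_row_Jmx m n (X Y : 'M[F]_(m, n)) : row_mx X Y *m Jmx F n = row_mx (- Y) X.
Proof. by rewrite /Jmx mul_row_block !mulmx0 mulmxN !mulmx1 add0r addr0. Qed.

End Symplectic.

Section DAmx.
Variables (F : finFieldType) (r t n : nat).
Variables (Br : 'M[F]_(r, n)) (Bt : 'M[F]_(t, n)) (A : 'M[F]_t).
Local Notation DA := (DAmx Br Bt A).
Local Notation M := (A *m Bt *m Bt^T).

Lemma row_free_DAmx : row_free (col_mx Br Bt) -> row_free DA.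
Proof.
move=> frH; rewrite -kermx_eq0; apply/rowV0P => v; rewrite sub_kermx.
rewrite -[v]hsubmxK -[lsubmx v]hsubmxK; move: (lsubmx _) (rsubmx _) (rsubmx v) => a b c.
rewrite /DAmx !mul_row_col !mul_mx_row !mulmx0 !add_row_mx !addr0 row_mx_eq0.
case/andP=> /eqP Hab /eqP Hc.
have /andP[/eqP b0 /eqP a0] : (b == 0) && (a == 0).
  by rewrite -row_mx_eq0 -(mulmx_free_eq0 _ frH) mul_row_col addrC Hab.
have : row_mx c (0 : 'M_(1, t)) *m col_mx Br Bt == 0.
  by rewrite mul_row_col mul0mx addr0 -Hc a0 mul0mx add0r.
rewrite (mulmx_free_eq0 _ frH) row_mx_eq0 eqxx andbT => /eqP c0.
by rewrite a0 b0 c0 !row_mx0.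
Qed.

Lemma rank_DAmx : row_free (col_mx Br Bt) -> \rank DA = (t + r + r)%N.
Proof. by move/row_free_DAmx/eqP. Qed.

Lemma sdual_DAmx (v : 'rV[F]_(n + n)) : (v <= sdual DA)%MS ->
  [/\ lsubmx v *m Br^T = 0, rsubmx v *m Br^T = 0 & rsubmx v *m Bt^T = lsubmx v *m (A *m Bt)^T].
Proof.
rewrite sub_kermx -[v]hsubmxK mulmxA mul_row_Jmx hsubmxK /DAmx.
rewrite !tr_col_mx !tr_row_mx !trmx0 !mul_mx_row !mul_row_col !mulmx0 !mulNmx addr0 add0r.
by rewrite !row_mx_eq0 oppr_eq0 addrC subr_eq0 eq_sym => /andP[/andP[/eqP-> /eqP->] /eqP->].
Qed.

Lemma DAmx_gram : Br *m Bt^T = 0 ->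
  DA *m (Jmx F n *m DA^T) =
  col_mx (col_mx (row_mx (row_mx (M^T - M) 0) 0) (row_mx (row_mx 0 0) (Br *m Br^T)))
         (row_mx (row_mx 0 (- (Br *m Br^T))) 0).
Proof.
move=> BrBt.
have BtBr : Bt *m Br^T = 0 by rewrite -[Bt]trmxK -trmx_mul BrBt trmx0.
have BrABt : Br *m (A *m Bt)^T = 0 by rewrite trmx_mul mulmxA BrBt mul0mx.
have ABtBr : A *m Bt *m Br^T = 0 by rewrite -mulmxA BtBr mulmx0.
rewrite mulmxA /DAmx !mul_col_mx !mul_row_Jmx oppr0.
rewrite !tr_col_mx !tr_row_mx !trmx0 !mul_mx_row !mul_row_col.
rewrite !mulNmx BtBr BrBt BrABt ABtBr !mulmx0 !mul0mx !oppr0 !addr0 !add0r.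
by rewrite [in RHS]trmx_mul trmxK addrC.
Qed.

Lemma rank_DAmx_gram : Br *m Bt^T = 0 ->
  \rank (DA *m (Jmx F n *m DA^T)) = (\rank (M - M^T)%R + (\rank (Br *m Br^T)).*2)%N.
Proof.
move/DAmx_gram->; set R := Br *m Br^T.
rewrite mxrank_col_mxAC -opprB.
have -> : col_mx (col_mx (row_mx (row_mx (- (M - M^T)) 0) 0) (row_mx (row_mx 0 (- R)) 0))
                 (row_mx (row_mx 0 0) R) = block_mx (block_mx (- (M - M^T)) 0 0 (- R)) 0 0 R.
  by rewrite [RHS]block_mxEv row_mx0 -col_mx0 -block_mxEh block_mxEv.
by rewrite !rank_diag_block_mx !eqmx_opp -addnn addnA.
Qed.

Lemma cD_DAmx : Br *m Bt^T = 0 ->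
  cD DA = (\rank (Br *m Br^T) + (\rank (M - M^T)%R)./2)%N.
Proof.
by move=> BrBt; rewrite cD_gram rank_DAmx_gram // halfD odd_double andbF add0n doubleK addnC.
Qed.

Lemma dD_ge_DAmx : (forall a, ~~ eigenvalue A a) ->
  dD_ge DA (Order.min (dH (edual (col_mx Br Bt)))%:Z
                      (Num.ceil ((1 + (#|F|%:Q)^-1) * (dH (edual Br))%:Q))).
Proof.
move=> noeig v /sdual_DAmx[xBr yBr yBt] v_notin.
have v_neq0 : v != 0 by apply: contraNneq v_notin => ->; rewrite sub0mx.
rewrite ge_min; case: (eqVneq (lsubmx v *m Bt^T) 0) => [xBt0 | xBt_neq0].
  apply/orP; left; rewrite lez_nat.
  have inH (u : 'rV_n) : u *m Br^T = 0 -> u *m Bt^T = 0 -> (u <= edual (col_mx Br Bt))%MS.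
    by move=> uBr uBt; rewrite sub_kermx tr_col_mx mul_mx_row uBr uBt row_mx0.
  have yBt0 : rsubmx v *m Bt^T = 0 by rewrite yBt trmx_mul mulmxA xBt0 mul0mx.
  case: (eqVneq (lsubmx v) 0) => [x0 | x_neq0].
    have y_neq0 : rsubmx v != 0.
      by apply: contraNneq v_neq0 => y0; rewrite -[v]hsubmxK x0 y0 row_mx0.
    exact: leq_trans (dH_le (inH _ yBr yBt0) y_neq0) (hwt_rsub_le_swt v).
  exact: leq_trans (dH_le (inH _ xBr xBt0) x_neq0) (hwt_lsub_le_swt v).
apply/orP; right; apply: ceil_le_of_mul_le; first by apply/card_gt0P; exists 0.
rewrite -sum_hwt_projective_line mulnDl mul1n addnC; apply: leq_add.
  apply: dH_le; first by rewrite sub_kermx xBr.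
  by apply: contraNneq xBt_neq0 => ->; rewrite mul0mx.
have -> : (#|F| * dH (edual Br) = \sum_(l : F) dH (edual Br))%N.
  by rewrite sum_nat_const cardT -cardE.
apply: leq_sum => l _.
apply: dH_le; first by rewrite sub_kermx mulmxBl -scalemxAl xBr yBr scaler0 subr0.
apply: contraNneq xBt_neq0 => line0.
rewrite -(mulmx_free_eq0 _ (row_free_tr_sub_scalar (noeig l))).
rewrite linearB /= tr_scalar_mx mulmxBr mul_mx_scalar -mulmxA -trmx_mul -yBt.
by rewrite scalemxAl -mulmxBl line0 mul0mx.
Qed.

End DAmx.

Theorem theorem2p6 (F : finFieldType) (n r tl tQ : nat)
  (Br : 'M[F]_(r, n)) (Btl : 'M[F]_(tl, n)) (BtQ : 'M[F]_(tQ, n))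
  (A0 : 'M[F]_tl) (A1 : 'M[F]_tQ) :
  let Bt := col_mx Btl BtQ in
  let Z := Btl *m Btl^T in
  let A := block_mx (A0 *m invmx Z) 0 0 A1 in
  let H := col_mx Br Bt in
  let c := \rank (H *m H^T) in
  let cp := ((c - tl) + (\rank (A0 - A0^T)%R)./2)%N in
  let DA := DAmx Br Bt A in
  (1 <= n)%N -> (2 <= tl + tQ)%N ->
  row_free Br -> row_free Bt ->
  mxdirect (Br + Bt) ->
  Br *m Bt^T = 0 ->
  BtQ *m Bt^T = 0 ->
  admissible_Z Z ->
  A \in unitmx ->
  (forall a : F, ~~ eigenvalue A a) ->
  [/\ cD DA = cp,
      cp = (c - \rank (Bt *m Bt^T) + (\rank (A0 - A0^T)%R)./2)%N,
      kD DA = (n%:Z - (2 * r)%:Z - (tl + tQ)%:Z + cp%:Z)%R &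
      dD_ge DA (Order.min (dH (edual H))%:Z
                  (Num.ceil ((1 + (#|F|%:Q)^-1) * (dH (edual Br))%:Q)))].
Proof.
move=> Bt Z A H c cp DA _ _ frBr frBt dirH BrBt BtQBt admZ _ noeig.
have Z_unit := admissible_Z_unit admZ.
have [BtQBtl BtQBtQ] : BtQ *m Btl^T = 0 /\ BtQ *m BtQ^T = 0.
  by apply/eq_row_mx; rewrite -mul_mx_row -tr_col_mx row_mx0.
have BtlBtQ : Btl *m BtQ^T = 0 by rewrite -[Btl]trmxK -trmx_mul BtQBtl trmx0.
have BtBt : Bt *m Bt^T = block_mx Z 0 0 0.
  by rewrite tr_col_mx mul_col_row BtlBtQ BtQBtl BtQBtQ.
have rkBtBt : \rank (Bt *m Bt^T) = tl.
  by rewrite BtBt rank_diag_block_mx mxrank0 addn0 mxrank_unit.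
have M_E : A *m Bt *m Bt^T = block_mx A0 0 0 0.
  by rewrite -mulmxA BtBt mulmx_block !mulmx0 !mul0mx !addr0 -mulmxA mulVmx // mulmx1.
have cDE : cD DA = cp.
  rewrite cD_DAmx // /cp /c rank_gram_col_mx // rkBtBt addnK M_E tr_block_mx !trmx0.
  by rewrite opp_block_mx add_block_mx !oppr0 !addr0 rank_diag_block_mx mxrank0 addn0.
have frH : row_free H := row_free_col_mx frBr frBt dirH.
split => //; first by rewrite rkBtBt.
  by rewrite /kD cDE rank_DAmx //; lia.
exact: dD_ge_DAmx.
Qed.
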